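(* Let $\mathcal{T}$ be a triangulated category, let $X$ and $Y$ be indecomposable objects of $\mathcal{T}$, and let $u:X\to Y$ be an irreducible morphism. Then the mapping cone $C_u$ (the third object of a distinguished triangle $X\xrightarrow{u}Y\to C_u\to X[1]$) is indecomposable.
   Context: A morphism is irreducible if it is neither a split monomorphism nor a split epimorphism, and whenever it factors as $hg$, either $g$ is a split monomorphism or $h$ is a split epimorphism. *)

From HB Require Import structures.
From mathcomp Require Import all_boot all_algebra.
Set Implicit Arguments. Unset Strict Implicit. Unset Printing Implicit Defensive.
Import GRing.Theory.
Local Open Scope ring_scope.

Record preadditive := Preadditive {
  Ob :> Type;
  Mor : Ob -> Ob -> zmodType;
  comp : forall X Y Z : Ob, Mor Y Z -> Mor X Y -> Mor X Z;
  idm : forall X : Ob, Mor X X;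
  compA : forall X Y Z W (h : Mor Z W) (g : Mor Y Z) (f : Mor X Y),
      comp h (comp g f) = comp (comp h g) f;
  comp1m : forall X Y (f : Mor X Y), comp (idm Y) f = f;
  compm1 : forall X Y (f : Mor X Y), comp f (idm X) = f;
  compDl : forall X Y Z (g1 g2 : Mor Y Z) (f : Mor X Y),
      comp (g1 + g2) f = comp g1 f + comp g2 f;
  compDr : forall X Y Z (g : Mor Y Z) (f1 f2 : Mor X Y),
      comp g (f1 + f2) = comp g f1 + comp g f2
}.
Arguments comp {p X Y Z}.
Arguments idm {p}.
Arguments Mor {p}.

Section Basic.
Variable C : preadditive.

Definition is_zero (X : C) : Prop := idm X = 0.

Definition is_iso (X Y : C) (f : Mor X Y) : Prop :=
  exists g : Mor Y X, comp g f = idm X /\ comp f g = idm Y.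
Definition isomorphic (X Y : C) : Prop := exists f : Mor X Y, is_iso f.
Definition split_mono (X Y : C) (f : Mor X Y) : Prop :=
  exists g : Mor Y X, comp g f = idm X.
Definition split_epi (X Y : C) (f : Mor X Y) : Prop :=
  exists g : Mor Y X, comp f g = idm Y.

Definition is_biproduct (A B P : C) (i1 : Mor A P) (i2 : Mor B P)
    (p1 : Mor P A) (p2 : Mor P B) : Prop :=
  [/\ comp p1 i1 = idm A, comp p2 i2 = idm B, comp p1 i2 = 0,
      comp p2 i1 = 0 & comp i1 p1 + comp i2 p2 = idm P].

Definition is_additive : Prop :=
  (exists Z : C, is_zero Z) /\
  forall A B : C, exists (P : C) (i1 : Mor A P) (i2 : Mor B P)
    (p1 : Mor P A) (p2 : Mor P B), is_biproduct i1 i2 p1 p2.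

Definition indecomposable (X : C) : Prop :=
  ~ is_zero X /\
  forall (A B : C) (i1 : Mor A X) (i2 : Mor B X) (p1 : Mor X A) (p2 : Mor X B),
    is_biproduct i1 i2 p1 p2 -> is_zero A \/ is_zero B.

Definition irreducible (X Y : C) (f : Mor X Y) : Prop :=
  ~ split_mono f /\ ~ split_epi f /\
  forall (Z : C) (g : Mor X Z) (h : Mor Z Y), comp h g = f ->
    split_mono g \/ split_epi h.

End Basic.

Record triangulated := Triangulated {
  TC :> preadditive;
  tc_additive : is_additive TC;
  sh : TC -> TC;
  shM : forall X Y : TC, Mor X Y -> Mor (sh X) (sh Y);
  shM_D : forall X Y (f g : Mor X Y), shM (f + g) = shM f + shM g;
  shM_1 : forall X : TC, shM (idm X) = idm (sh X);
  shM_comp : forall X Y Z (g : Mor Y Z) (f : Mor X Y),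
      shM (comp g f) = comp (shM g) (shM f);
  shM_ff : forall X Y : TC, bijective (@shM X Y);
  sh_es : forall Z : TC, exists X : TC, isomorphic (sh X) Z;
  dist : forall X Y Z : TC, Mor X Y -> Mor Y Z -> Mor Z (sh X) -> Prop;
  TR1_iso : forall X Y Z X' Y' Z' (u : Mor X Y) (v : Mor Y Z) (w : Mor Z (sh X))
      (u' : Mor X' Y') (v' : Mor Y' Z') (w' : Mor Z' (sh X'))
      (a : Mor X X') (b : Mor Y Y') (c : Mor Z Z'),
      is_iso a -> is_iso b -> is_iso c ->
      comp b u = comp u' a -> comp c v = comp v' b -> comp (shM a) w = comp w' c ->
      dist u v w -> dist u' v' w';
  TR1_id : forall (X Z0 : TC), is_zero Z0 ->
      dist (idm X) (0 : Mor X Z0) (0 : Mor Z0 (sh X));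
  TR1_ex : forall (X Y : TC) (u : Mor X Y),
      exists (Z : TC) (v : Mor Y Z) (w : Mor Z (sh X)), dist u v w;
  TR2 : forall X Y Z (u : Mor X Y) (v : Mor Y Z) (w : Mor Z (sh X)),
      dist u v w <-> dist v w (- shM u);
  TR3 : forall X Y Z X' Y' Z' (u : Mor X Y) (v : Mor Y Z) (w : Mor Z (sh X))
      (u' : Mor X' Y') (v' : Mor Y' Z') (w' : Mor Z' (sh X'))
      (a : Mor X X') (b : Mor Y Y'),
      dist u v w -> dist u' v' w' -> comp b u = comp u' a ->
      exists c : Mor Z Z', comp c v = comp v' b /\ comp (shM a) w = comp w' c;
  TR4 : forall X Y Z Z' X' Y' (u : Mor X Y) (v : Mor Y Z)
      (j : Mor Y Z') (k : Mor Z' (sh X))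
      (l : Mor Z X') (i : Mor X' (sh Y))
      (m : Mor Z Y') (n : Mor Y' (sh X)),
      dist u j k -> dist v l i -> dist (comp v u) m n ->
      exists (f : Mor Z' Y') (g : Mor Y' X'),
        [/\ dist f g (comp (shM j) i),
            comp f j = comp m v, comp n f = k,
            comp g m = l & comp i g = comp (shM u) n]
}.

(* Suppose C = A ⊕ B with A, B nonzero; it suffices to show that the
   projection p : C -> A kills v (and symmetrically for B), since then v = 0
   and u would be a split epimorphism.  Complete p v to a triangle
   Y -> A -> E -> Y[1]; the morphism of triangles from the rotated triangle
   Y -> C -> X[1] -> Y[1] factors u[1] as X[1] -> E -> Y[1], and u[1] is
   again irreducible.  If X[1] -> E splits, then w kills the summand B, so B
   is a direct summand of the indecomposable Y through v, forcing u = 0.  If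
   E -> Y[1] splits, then p v = 0. *)
From Pilot Require Import Defs.
From mathcomp Require Import all_boot all_algebra.
From Stdlib Require Import Classical.
Set Implicit Arguments. Unset Strict Implicit. Unset Printing Implicit Defensive.
Import GRing.Theory.
Local Open Scope ring_scope.

(* ssrfun also defines [comp] and [compA]. *)
Local Notation comp := Defs.comp.
Local Notation compA := Defs.compA.

Section Preadditive.
Variable P : preadditive.

Lemma comp0m (X Y Z : P) (f : Mor X Y) : comp (0 : Mor Y Z) f = 0.
Proof. by apply: (addrI (comp 0 f)); rewrite addr0 -compDl addr0. Qed.

Lemma compm0 (X Y Z : P) (g : Mor Y Z) : comp g (0 : Mor X Y) = 0.
Proof. by apply: (addrI (comp g 0)); rewrite addr0 -compDr addr0. Qed.

Lemma compNm (X Y Z : P) (g : Mor Y Z) (f : Mor X Y) : comp (- g) f = - comp g f.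
Proof. by apply/eqP; rewrite -subr_eq0 opprK -compDl addNr comp0m. Qed.

Lemma compmN (X Y Z : P) (g : Mor Y Z) (f : Mor X Y) : comp g (- f) = - comp g f.
Proof. by apply/eqP; rewrite -subr_eq0 opprK -compDr addNr compm0. Qed.

Lemma compBl (X Y Z : P) (g1 g2 : Mor Y Z) (f : Mor X Y) :
  comp (g1 - g2) f = comp g1 f - comp g2 f.
Proof. by rewrite compDl compNm. Qed.

Lemma compBr (X Y Z : P) (g : Mor Y Z) (f1 f2 : Mor X Y) :
  comp g (f1 - f2) = comp g f1 - comp g f2.
Proof. by rewrite compDr compmN. Qed.

Lemma from_zero (Z0 W : P) (f : Mor Z0 W) : is_zero Z0 -> f = 0.
Proof. by move=> Z0_0; rewrite -(compm1 f) Z0_0 compm0. Qed.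

Lemma split_mono_compl (X Y Z : P) (a : Mor Y Z) (f : Mor X Y) :
  split_mono (comp a f) -> split_mono f.
Proof. by case=> r rK; exists (comp r a); rewrite -compA. Qed.

Lemma split_epi_compr (X Y Z : P) (g : Mor Y Z) (a : Mor X Y) :
  split_epi (comp g a) -> split_epi g.
Proof. by case=> s sK; exists (comp a s); rewrite compA. Qed.

Lemma split_mono_cancel0 (X Y Z : P) (f : Mor Y Z) (g : Mor X Y) :
  split_mono f -> comp f g = 0 -> g = 0.
Proof. by case=> r rK fg0; rewrite -(comp1m g) -rK -compA fg0 compm0. Qed.

Lemma split_epi_cancel0 (X Y Z : P) (f : Mor X Y) (g : Mor Y Z) :
  split_epi f -> comp g f = 0 -> g = 0.
Proof. by case=> s sK gf0; rewrite -(compm1 g) -sK compA gf0 comp0m. Qed.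

End Preadditive.

Section Triangulated.
Variable T : triangulated.

Lemma shM0 (X Y : T) : shM (0 : Mor X Y) = 0.
Proof. by apply: (addrI (shM (0 : Mor X Y))); rewrite addr0 -shM_D addr0. Qed.

Lemma shM_inj (X Y : T) : injective (@shM T X Y).
Proof. by have [k kK _] := shM_ff X Y; apply: can_inj kK. Qed.

Lemma shM_surj (X Y : T) (c : Mor (sh X) (sh Y)) : exists f : Mor X Y, shM f = c.
Proof. by have [k _ Kk] := shM_ff X Y; exists (k c). Qed.

Lemma split_mono_shM (X Y : T) (f : Mor X Y) : split_mono (shM f) <-> split_mono f.
Proof.
split=> [[r rK] | [r rK]]; last by exists (shM r); rewrite -shM_comp rK shM_1.
have [r0 r0E] := shM_surj r; move: rK; rewrite -r0E => rK.
by exists r0; apply: shM_inj; rewrite shM_comp rK shM_1.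
Qed.

Lemma split_epi_shM (X Y : T) (f : Mor X Y) : split_epi (shM f) <-> split_epi f.
Proof.
split=> [[s sK] | [s sK]]; last by exists (shM s); rewrite -shM_comp sK shM_1.
have [s0 s0E] := shM_surj s; move: sK; rewrite -s0E => sK.
by exists s0; apply: shM_inj; rewrite shM_comp sK shM_1.
Qed.

Lemma irreducible_shM (X Y : T) (u : Mor X Y) : irreducible u -> irreducible (shM u).
Proof.
case=> u_mono [u_epi u_irr]; split; first by move/split_mono_shM.
split; first by move/split_epi_shM.
move=> Z g h hg; have [Z' [phi [psi [psiK phiK]]]] := sh_es Z.
have [g0 g0E] := shM_surj (comp psi g).
have [h0 h0E] := shM_surj (comp h phi).
have : comp h0 g0 = u.
  by apply: shM_inj; rewrite shM_comp g0E h0E -compA (compA phi) phiK comp1m.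
case/u_irr=> [/split_mono_shM | /split_epi_shM]; rewrite ?g0E ?h0E.
- by move/split_mono_compl; left.
- by move/split_epi_compr; right.
Qed.

Lemma zero_obj : exists Z0 : T, is_zero Z0.
Proof. by case: (tc_additive T). Qed.

Lemma dist_rot (X Y Z : T) (u : Mor X Y) (v : Mor Y Z) (w : Mor Z (sh X)) :
  dist u v w -> dist v w (- shM u).
Proof. exact: (proj1 (TR2 _ _ _)). Qed.

Lemma dist_comp (X Y Z : T) (u : Mor X Y) (v : Mor Y Z) (w : Mor Z (sh X)) :
  dist u v w -> comp v u = 0.
Proof.
move=> d; have [Z0 Z0_0] := zero_obj.
have [c [cE _]] := TR3 (a := idm X) (b := u) (TR1_id X Z0_0) d erefl.
by rewrite -cE compm0.
Qed.

Lemma dist_factor_first (A B D W : T) (a : Mor A B) (b : Mor B D)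
    (c : Mor D (sh A)) (f : Mor W B) :
  dist a b c -> comp b f = 0 -> exists g : Mor W A, f = comp a g.
Proof.
move=> d bf0; have [Z0 Z0_0] := zero_obj.
have [c' [_ c'E]] := TR3 (a := f) (b := (0 : Mor Z0 D))
  (dist_rot (TR1_id W Z0_0)) (dist_rot d) (etrans (compm0 _ _) (esym bf0)).
have [g gE] := shM_surj c'.
exists g; apply: shM_inj; rewrite shM_comp gE.
by apply: oppr_inj; rewrite -compNm -c'E shM_1 compmN compm1.
Qed.

Lemma dist_split_epi_of_eq0 (X Y Z : T) (u : Mor X Y) (v : Mor Y Z)
    (w : Mor Z (sh X)) :
  dist u v w -> v = 0 -> split_epi u.
Proof.
move=> d v0; have [g gE] := dist_factor_first d (etrans (compm1 v) v0).
by exists g.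
Qed.

Lemma dist_split_mono_last_eq0 (X Y Z : T) (u : Mor X Y) (v : Mor Y Z)
    (w : Mor Z (sh X)) :
  dist u v w -> split_mono u -> w = 0.
Proof.
move=> d /split_mono_shM u_mono; apply: (split_mono_cancel0 u_mono).
by apply: oppr_inj; rewrite -compNm oppr0 (dist_comp (dist_rot (dist_rot d))).
Qed.

Lemma dist_split_epi_first_eq0 (X Y Z : T) (u : Mor X Y) (v : Mor Y Z)
    (w : Mor Z (sh X)) :
  dist u v w -> split_epi w -> u = 0.
Proof.
move=> d w_epi; apply: shM_inj; rewrite shM0; apply: (split_epi_cancel0 w_epi).
by apply: oppr_inj; rewrite -compNm oppr0 (dist_comp (dist_rot (dist_rot d))).
Qed.

(* The splitting comes from [idm Z = v s] and [idm Y - s v = u g], obtained by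
   exactness once [w = 0]. *)
Lemma dist_split_mono_biproduct (X Y Z : T) (u : Mor X Y) (v : Mor Y Z)
    (w : Mor Z (sh X)) (r : Mor Y X) :
  dist u v w -> comp r u = idm X -> exists s : Mor Z Y, is_biproduct u s r v.
Proof.
move=> d rK.
have w0 : comp w (idm Z) = 0.
  by rewrite (dist_split_mono_last_eq0 d) ?comp0m //; exists r.
have [s sE] := dist_factor_first (dist_rot d) w0.
have vu0 := dist_comp d.
have : comp v (idm Y - comp s v) = 0.
  by rewrite compBr compm1 compA -sE comp1m subrr.
case/(dist_factor_first d) => g gE.
have svE : comp s v = idm Y - comp u g by rewrite -gE opprB addrC subrK.
exists (s - comp u (comp r s)); split => //.
- by rewrite compBr -sE compA vu0 comp0m subr0.
- by rewrite compBr compA rK comp1m subrr.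
- rewrite compBl svE -!compA svE compBr compm1 (compA r u g) rK comp1m compBr.
  by rewrite opprB addrCA [comp u r + _]addrC !subrK.
Qed.

Lemma split_mono_to_indecomposable (B Y : T) (s : Mor B Y) (r : Mor Y B) :
  indecomposable Y -> ~ is_zero B -> comp r s = idm B -> comp s r = idm Y.
Proof.
move=> [_ Y_dec] nB rK; have [K [t [q d]]] := TR1_ex s.
have [i bp] := dist_split_mono_biproduct d rK.
case: (Y_dec _ _ _ _ _ _ bp) => // K0.
by case: bp => _ _ _ _; rewrite (from_zero i K0) comp0m addr0.
Qed.

Lemma irreducible_neq0 (X Y : T) (u : Mor X Y) :
  ~ is_zero X -> ~ is_zero Y -> irreducible u -> u <> 0.
Proof.
move=> nX nY [_ [_ u_irr]] u0; have [Z0 _] := zero_obj.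
case: (u_irr Z0 0 0); first by rewrite compm0 u0.
- by case=> r rK; apply: nX; rewrite /is_zero -rK compm0.
- by case=> s sK; apply: nY; rewrite /is_zero -sK comp0m.
Qed.

Lemma cone_proj_comp_eq0 (X Y C A B : T) (u : Mor X Y) (v : Mor Y C)
    (w : Mor C (sh X)) (p : Mor C A) (i : Mor B C) (p' : Mor C B) :
  indecomposable X -> indecomposable Y -> irreducible u -> dist u v w ->
  comp p i = 0 -> comp p' i = idm B -> ~ is_zero B -> comp p v = 0.
Proof.
move=> [nX _] iY iu d pi0 p'iK nB.
have [E [b [c dE]]] := TR1_ex (comp p v).
have [e [ewE ceE]] := TR3 (a := idm Y) (b := p) (dist_rot d) dE
  (esym (compm1 _)).
have : comp (- c) e = shM u by rewrite compNm -ceE shM_1 comp1m opprK.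
case/(proj2 (proj2 (irreducible_shM iu))) => [[r rK] | [s sK]].
- have wE : w = comp r (comp b p) by rewrite -ewE compA rK comp1m.
  have wi0 : comp w i = 0 by rewrite wE -!compA pi0 !compm0.
  have [g iE] := dist_factor_first (dist_rot d) wi0.
  have : comp (comp p' v) g = idm B by rewrite -compA -iE.
  move/(split_mono_to_indecomposable iY nB) => vK.
  exfalso; apply: (irreducible_neq0 nX (proj1 iY) iu).
  by rewrite -(comp1m u) -vK -!compA (dist_comp d) !compm0.
- apply: (dist_split_epi_first_eq0 dE).
  by exists (- s); rewrite compmN -compNm.
Qed.

End Triangulated.

Theorem proposition6 (T : triangulated) (X Y C : T)
    (u : Mor X Y) (v : Mor Y C) (w : Mor C (sh X)) :
  indecomposable X -> indecomposable Y -> irreducible u ->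
  dist u v w -> indecomposable C.
Proof.
move=> iX iY iu d.
have v_neq0 : v <> 0 by move/(dist_split_epi_of_eq0 d); apply: (proj1 (proj2 iu)).
split=> [C0 | A B i1 i2 p1 p2 [p1i1 p2i2 p1i2 p2i1 sumE]].
  by apply: v_neq0; rewrite -(comp1m v) C0 comp0m.
case: (classic (is_zero A)) => [|nA]; first by left.
case: (classic (is_zero B)) => [|nB]; first by right.
exfalso; apply: v_neq0.
rewrite -(comp1m v) -sumE compDl -!compA.
rewrite (cone_proj_comp_eq0 iX iY iu d p1i2 p2i2 nB).
by rewrite (cone_proj_comp_eq0 iX iY iu d p2i1 p1i1 nA) !compm0 addr0.
Qed.
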